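(* Assume Martin's Axiom and the negation of the Continuum Hypothesis. Let $(\omega_\alpha)_{\alpha<\omega_1}$ be a family of non-decreasing maps $[0,\infty)\to[0,\infty)$ with $\omega_\alpha(0)=0$ for every $\alpha$. Then there exist an uncountable set $C\subset\omega_1$ and a (finite-valued) function $\omega:[0,\infty)\to[0,\infty)$ such that $\omega\ge\omega_\alpha$ for all $\alpha\in C$. *)

From Stdlib Require Import Reals.
Open Scope R_scope.

Definition countable_type (A : Type) : Prop :=
  exists f : A -> nat, forall x y, f x = f y -> x = y.

Definition countable_set {A : Type} (S : A -> Prop) : Prop :=
  exists f : A -> nat, forall x y, S x -> S y -> f x = f y -> x = y.

(** The continuum is modelled by Cantor space [nat -> bool] (2^aleph_0). *)
Definition card_lt_continuum (J : Type) : Prop :=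
  (exists f : J -> (nat -> bool), forall x y, f x = f y -> x = y) /\
  ~ (exists g : (nat -> bool) -> J, forall x y, g x = g y -> x = y).

Definition is_omega1 (I : Type) (lt : I -> I -> Prop) : Prop :=
  (forall x, ~ lt x x) /\
  (forall x y z, lt x y -> lt y z -> lt x z) /\
  (forall x y, lt x y \/ x = y \/ lt y x) /\
  well_founded lt /\
  (forall a, countable_set (fun x => lt x a)) /\
  ~ countable_type I.

Definition is_poset {P : Type} (le : P -> P -> Prop) : Prop :=
  (forall p, le p p) /\
  (forall p q, le p q -> le q p -> p = q) /\
  (forall p q r, le p q -> le q r -> le p r).

Definition compatible {P : Type} (le : P -> P -> Prop) (p q : P) : Prop :=
  exists r, le r p /\ le r q.

Definition antichain {P : Type} (le : P -> P -> Prop) (A : P -> Prop) : Prop :=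
  forall p q, A p -> A q -> p <> q -> ~ compatible le p q.

Definition ccc {P : Type} (le : P -> P -> Prop) : Prop :=
  forall A, antichain le A -> countable_set A.

Definition dense {P : Type} (le : P -> P -> Prop) (D : P -> Prop) : Prop :=
  forall p, exists q, D q /\ le q p.

Definition is_filter {P : Type} (le : P -> P -> Prop) (G : P -> Prop) : Prop :=
  (exists p, G p) /\
  (forall p q, G p -> le p q -> G q) /\
  (forall p q, G p -> G q -> exists r, G r /\ le r p /\ le r q).

Definition MartinsAxiom : Prop :=
  forall (P : Type) (le : P -> P -> Prop),
    inhabited P -> is_poset le -> ccc le ->
    forall (J : Type) (D : J -> P -> Prop),
      card_lt_continuum J ->
      (forall j, dense le (D j)) ->
      exists G, is_filter le G /\ forall j, exists p, G p /\ D j p.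

(** Negation of CH: aleph_1 < 2^aleph_0 (with omega_1 given by [I]). *)
Definition not_CH (I : Type) : Prop := card_lt_continuum I.

(** Discretise: replace each modulus [om a] by the sequence
    [f a n := ceiling (om a n)].  By monotonicity, a sequence [W] bounding
    [f a] everywhere yields the bound [w t := W (ceiling t)] for [om a].
    So it suffices to find uncountably many [a] whose sequences [f a] are
    bounded everywhere by a single [W : nat -> nat].

    For this we force with Hechler's poset: a condition is a finite stem
    [s] together with a lower bound [b : nat -> nat] for the future values.
    Two conditions with the same stem are compatible, and stems are
    countably many, so the poset is ccc.  Martin's axiom, applied to the
    dense sets "dominate [f a] beyond the stem, and have a stem of length
    at least [h a]" ([h] a surjection of the index set onto [nat]), gives a
    filter [G] whose stems define a generic sequence [g] dominating each
    [f a] beyond the stem of a condition [p a] in [G].  The finitely many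
    values of [f a] below that stem, together with the stem itself, form a
    countable datum; by the pigeonhole principle uncountably many [a] share
    it, and [W n := max (f a0 n) (g n)] bounds all of them. *)

From Stdlib Require Import Reals ZArith Lra Lia List Classical ClassicalEpsilon
  FunctionalExtensionality Cantor.
Import ListNotations.
Open Scope R_scope.

Lemma to_nat_inj (p q : nat * nat) : Cantor.to_nat p = Cantor.to_nat q -> p = q.
Proof. intro E. rewrite <- (cancel_of_to p), <- (cancel_of_to q), E. reflexivity. Qed.

Fixpoint lcode (l : list nat) : nat :=
  match l with [] => 0%nat | x :: l' => S (Cantor.to_nat (x, lcode l')) end.

Lemma lcode_inj (l l' : list nat) : lcode l = lcode l' -> l = l'.
Proof.
  revert l'; induction l as [|x l IH]; intros [|y l'] E; try discriminate; auto.
  assert (Ecode : Cantor.to_nat (x, lcode l) = Cantor.to_nat (y, lcode l'))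
    by (change (S (Cantor.to_nat (x, lcode l)) = S (Cantor.to_nat (y, lcode l'))) in E;
        lia).
  apply to_nat_inj in Ecode. injection Ecode as -> Ecode. f_equal. auto.
Qed.

Lemma uncountable_fiber {I : Type} (k : I -> nat) :
  ~ countable_type I -> exists m, ~ countable_set (fun a => k a = m).
Proof.
  intros HI. apply NNPP; intro Hall. apply HI.
  assert (Hcount : forall m, countable_set (fun a => k a = m)).
  { intro m. apply NNPP; intro Hm. apply Hall; eauto. }
  destruct (choice _ Hcount) as [phi Hphi].
  exists (fun a => Cantor.to_nat (k a, phi (k a) a)).
  intros x y E. apply to_nat_inj in E. injection E as Ek Ephi.
  rewrite <- Ek in Ephi. apply (Hphi (k x)); auto.
Qed.

Lemma uncountable_inhabited {I : Type} (C : I -> Prop) :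
  ~ countable_set C -> exists a, C a.
Proof.
  intro HC. apply NNPP; intro Hno. apply HC.
  exists (fun _ => 0%nat). intros x y Hx. exfalso. eauto.
Qed.

Fixpoint build {I : Type} (pick : list I -> I) (n : nat) : list I :=
  match n with 0 => [] | S n => pick (build pick n) :: build pick n end.

Lemma build_in {I : Type} (pick : list I -> I) (n m : nat) :
  (n < m)%nat -> In (pick (build pick n)) (build pick m).
Proof.
  induction m as [|m IH]; intro Hnm; [lia|]. simpl.
  destruct (Nat.eq_dec n m) as [->|]; [left; auto | right; apply IH; lia].
Qed.

(** An uncountable type contains an injective sequence: no finite list
    exhausts it, so fresh elements can be picked forever. *)
Lemma uncountable_injective_seq {I : Type} :
  ~ countable_type I -> exists a : nat -> I, forall n m, a n = a m -> n = m.
Proof.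
  intro HI.
  assert (fresh : forall l : list I, exists x, ~ In x l).
  { intro l. apply NNPP; intro Hfull. apply HI.
    assert (Hpos : forall x, exists n, nth_error l n = Some x).
    { intro x. apply In_nth_error. apply NNPP; intro; apply Hfull; eauto. }
    destruct (choice _ Hpos) as [pos Hpos'].
    exists pos. intros x y E. pose proof (Hpos' x) as Ex.
    rewrite E, Hpos' in Ex. congruence. }
  destruct (choice _ fresh) as [pick Hpick].
  exists (fun n => pick (build pick n)). intros n m E.
  destruct (Nat.lt_total n m) as [H|[H|H]]; auto; exfalso.
  - apply (Hpick (build pick m)). rewrite <- E. apply build_in; auto.
  - apply (Hpick (build pick n)). rewrite E. apply build_in; auto.
Qed.

Lemma uncountable_onto_nat {I : Type} :
  ~ countable_type I -> exists h : I -> nat, forall n, exists x, h x = n.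
Proof.
  intro HI. destruct (uncountable_injective_seq HI) as [a Ha].
  assert (Hidx : forall x : I, exists n, (exists k, a k = x) -> a n = x).
  { intro x. destruct (classic (exists k, a k = x)) as [[k Hk]|Hno].
    - exists k. auto.
    - exists 0%nat. intro; contradiction. }
  destruct (choice _ Hidx) as [h Hh].
  exists h. intro n. exists (a n). apply Ha, Hh. eauto.
Qed.

(** A condition: a finite stem, and a lower bound for the values of the
    generic sequence beyond the stem. *)
Record hcond := HCond { stem : list nat; bound : nat -> nat }.

Definition hle (r p : hcond) : Prop :=
  (exists t, stem r = stem p ++ t) /\
  (forall n, (bound p n <= bound r n)%nat) /\
  (forall n, (length (stem p) <= n < length (stem r))%nat ->
             (bound p n <= nth n (stem r) 0)%nat).

Lemma hle_poset : is_poset hle.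
Proof.
  split; [|split].
  - intros [s f]; unfold hle; simpl. split; [exists []; rewrite app_nil_r; auto|].
    split; intros; lia.
  - intros [s f] [s' g] [[t1 E1] [H1 _]] [[t2 E2] [H2 _]]; simpl in *.
    assert (t1 = []) as ->.
    { apply (f_equal (@length nat)) in E1, E2. rewrite length_app in *.
      destruct t1; simpl in *; [auto|lia]. }
    rewrite app_nil_r in E1. subst. f_equal.
    apply functional_extensionality; intro n. specialize (H1 n); specialize (H2 n); lia.
  - intros [u m] [v k] [s f] [[t1 E1] [H1 H1']] [[t2 E2] [H2 H2']]; simpl in *.
    split; [exists (t2 ++ t1); rewrite E1, E2, app_assoc; auto|].
    split; [intro n; specialize (H1 n); specialize (H2 n); simpl; lia|].
    simpl; intros n Hn. destruct (Nat.lt_ge_cases n (length v)).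
    + rewrite E1, app_nth1 by lia. apply H2'. lia.
    + specialize (H1' n ltac:(lia)). specialize (H2 n). lia.
Qed.

(** Conditions with the same stem are compatible: take the maximum bound. *)
Lemma same_stem_compatible (p q : hcond) : stem p = stem q -> compatible hle p q.
Proof.
  destruct p as [s f], q as [s' g]; simpl; intros ->.
  exists (HCond s' (fun n => Nat.max (f n) (g n))). unfold hle; simpl.
  split; (split; [exists []; rewrite app_nil_r; auto|split; intros; lia]).
Qed.

(** Hence an antichain is coded injectively by the stems of its members. *)
Lemma hle_ccc : ccc hle.
Proof.
  intros A HA. exists (fun p => lcode (stem p)). intros p q Hp Hq E.
  apply lcode_inj in E. apply NNPP; intro Hne.
  exact (HA p q Hp Hq Hne (same_stem_compatible p q E)).
Qed.

Lemma nth_map_seq (g : nat -> nat) (k len n : nat) : (n < len)%nat ->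
  nth n (map g (seq k len)) 0%nat = g (k + n)%nat.
Proof.
  intros. rewrite nth_indep with (d' := g 0%nat) by (rewrite length_map, length_seq; lia).
  rewrite map_nth, seq_nth by lia. reflexivity.
Qed.

(** The conditions whose bound dominates [f] and whose stem has length at
    least [N] are dense: lengthen the stem using the old bound, and raise
    the bound to [f]. *)
Lemma dominating_dense (f : nat -> nat) (N : nat) :
  dense hle (fun p => (forall n, (f n <= bound p n)%nat) /\ (N <= length (stem p))%nat).
Proof.
  intros [s g].
  exists (HCond (s ++ map g (seq (length s) N)) (fun n => Nat.max (g n) (f n))).
  unfold hle; simpl. rewrite length_app, length_map, length_seq.
  split; [split; [intro; lia|lia]|].
  split; [eexists; reflexivity|]. split; [intro; lia|].
  intros n Hn. rewrite app_nth2, nth_map_seq by lia.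
  replace (length s + (n - length s))%nat with n by lia. lia.
Qed.

(** Within a filter, the stem entries of any member respect the bound of
    every other member beyond that member's stem: both have a common
    extension in the filter. *)
Lemma filter_respects_bound (G : hcond -> Prop) (p q : hcond) (n : nat) :
  is_filter hle G -> G p -> G q ->
  (length (stem p) <= n < length (stem q))%nat ->
  (bound p n <= nth n (stem q) 0)%nat.
Proof.
  intros (_ & _ & Hdir) Gp Gq Hn.
  destruct (Hdir _ _ Gp Gq) as [r [_ [[_ [_ Hrp]] [[t Hrq] _]]]].
  assert (Hlen : (length (stem q) <= length (stem r))%nat)
    by (rewrite Hrq, length_app; lia).
  specialize (Hrp n ltac:(lia)). rewrite Hrq, app_nth1 in Hrp by lia. exact Hrp.
Qed.

(** The datum shared by the final subfamily: a stem, and the values of a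
    sequence below its length, coded as one natural number. *)
Definition stem_datum (s : list nat) (f : nat -> nat) : nat :=
  Cantor.to_nat (lcode s, lcode (map f (seq 0 (length s)))).

Lemma stem_datum_eq (s s' : list nat) (f f' : nat -> nat) (n : nat) :
  stem_datum s f = stem_datum s' f' -> (n < length s)%nat -> f n = f' n.
Proof.
  unfold stem_datum. intros E Hn. apply to_nat_inj in E. injection E as Es Ef.
  apply lcode_inj in Es, Ef. subst s'.
  apply (f_equal (fun l => nth n l 0%nat)) in Ef. rewrite !nth_map_seq in Ef by exact Hn. exact Ef.
Qed.

Theorem bounded_uncountable_subfamily (HMA : MartinsAxiom) (I : Type)
  (HI : ~ countable_type I) (Hsmall : card_lt_continuum I) (f : I -> nat -> nat) :
  exists (C : I -> Prop) (W : nat -> nat),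
    ~ countable_set C /\ forall a, C a -> forall n, (f a n <= W n)%nat.
Proof.
  destruct (uncountable_onto_nat HI) as [h Hh].
  destruct (HMA hcond hle (inhabits (HCond [] (fun _ => 0%nat))) hle_poset hle_ccc I
              (fun a p => (forall n, (f a n <= bound p n)%nat) /\ (h a <= length (stem p))%nat)
              Hsmall (fun a => dominating_dense (f a) (h a))) as [G [HG HGmeets]].
  destruct (choice _ HGmeets) as [p Hp].
  (* The filter contains arbitrarily long stems; [g] is the generic sequence. *)
  assert (Hlong : forall n, exists q, G q /\ (n < length (stem q))%nat).
  { intro n. destruct (Hh (S n)) as [a Ha].
    destruct (Hp a) as [Gpa [_ Hlen]]. exists (p a). split; [exact Gpa|lia]. }
  destruct (choice _ Hlong) as [q Hq].
  pose (g := fun n => nth n (stem (q n)) 0%nat).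
  destruct (uncountable_fiber (fun a => stem_datum (stem (p a)) (f a)) HI) as [m Hm].
  destruct (uncountable_inhabited _ Hm) as [a0 Ha0].
  exists (fun a => stem_datum (stem (p a)) (f a) = m), (fun n => Nat.max (f a0 n) (g n)).
  split; [exact Hm|]. intros a Ha n.
  destruct (Nat.lt_ge_cases n (length (stem (p a)))) as [Hshort|Hbeyond].
  - (* below the stem, [f a] agrees with [f a0] *)
    rewrite (stem_datum_eq _ _ _ _ n (eq_trans Ha (eq_sym Ha0)) Hshort). lia.
  - (* beyond the stem, [f a] is dominated by the generic sequence *)
    destruct (Hp a) as [Gpa [Hdom _]]. destruct (Hq n) as [Gqn Hqn].
    pose proof (filter_respects_bound G (p a) (q n) n HG Gpa Gqn (conj Hbeyond Hqn)).
    specialize (Hdom n). unfold g. lia.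
Qed.

Definition nceil (x : R) : nat := Z.to_nat (up x).

Lemma nceil_ge (x : R) : x <= INR (nceil x).
Proof.
  unfold nceil. destruct (archimed x) as [Hup _].
  destruct (Z.le_gt_cases 0 (up x)) as [Hnn|Hneg].
  - rewrite INR_IZR_INZ, Z2Nat.id by exact Hnn. lra.
  - replace (Z.to_nat (up x)) with 0%nat by lia. apply IZR_lt in Hneg. simpl. lra.
Qed.

Theorem proposition3p7
  (HMA : MartinsAxiom)
  (I : Type) (ltI : I -> I -> Prop) (HI : is_omega1 I ltI) (HnCH : not_CH I)
  (om : I -> R -> R)
  (Hnn : forall a t, 0 <= t -> 0 <= om a t)
  (Hmono : forall a s t, 0 <= s -> s <= t -> om a s <= om a t)
  (H0 : forall a, om a 0 = 0) :
  exists (C : I -> Prop) (w : R -> R),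
    ~ countable_set C /\
    (forall t, 0 <= t -> 0 <= w t) /\
    (forall a, C a -> forall t, 0 <= t -> om a t <= w t).
Proof.
  destruct HI as (_ & _ & _ & _ & _ & Huncountable).
  destruct (bounded_uncountable_subfamily HMA I Huncountable HnCH
              (fun a n => nceil (om a (INR n)))) as (C & W & HC & HW).
  exists C, (fun t => INR (W (nceil t))).
  split; [exact HC|split].
  - intros; apply pos_INR.
  - intros a Ha t Ht.
    apply Rle_trans with (om a (INR (nceil t))); [apply Hmono; auto using nceil_ge|].
    apply Rle_trans with (INR (nceil (om a (INR (nceil t))))); [apply nceil_ge|].
    apply le_INR, HW, Ha.
Qed.
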